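(* Let $p\ge5$, $1\le a\le p-4$, $s_\varepsilon\in\{0,\dots,p-2\}$, and let $k=k_\bullet(p-1)+k_\varepsilon$ with $k_\bullet\ge1$. Then $\mathrm M(k)\le\lfloor\log_p k_\bullet\rfloor+3$.
   Context: $v_p(p)=1$. $\{m\}\in\{0,\dots,p-2\}$ is the residue of $m$ mod $p-1$. $k_\varepsilon=2+\{a+2s_\varepsilon\}$, $\delta_\varepsilon=\lfloor(s_\varepsilon+\{a+s_\varepsilon\})/(p-1)\rfloor$; if $a+s_\varepsilon<p-1$, $t_1=s_\varepsilon+\delta_\varepsilon$, $t_2=a+s_\varepsilon+\delta_\varepsilon+2$; else $t_1=\{a+s_\varepsilon\}+\delta_\varepsilon+1$, $t_2=a+s_\varepsilon+\delta_\varepsilon+1$. For $k\ge2$, $k=k_\bullet(p-1)+k_\varepsilon$: $d_k^{\mathrm{Iw}}=2k_\bullet+2-2\delta_\varepsilon$; $d_k^{\mathrm{ur}}=2\lfloor(k_\bullet-t_1)/(p+1)\rfloor+1+\eta_k$ ($\eta_k=1$ if $k_\bullet-(p+1)\lfloor(k_\bullet-t_1)/(p+1)\rfloor\ge t_2$, else $0$). $w_k=\exp(p(k-2))-1$ (so $v_p(w_k-w_{k'})=1+v_p(k-k')$). For $n\ge1$, $m_n(k)=\min\{n-d_k^{\mathrm{ur}},d_k^{\mathrm{Iw}}-d_k^{\mathrm{ur}}-n\}$ if $d_k^{\mathrm{ur}}<n<d_k^{\mathrm{Iw}}-d_k^{\mathrm{ur}}$, else $0$. $\mathrm M(k)=\max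 v_p(w_{k'}-w_k)$ over all $k'\ne k$, $k'\ge2$, $k'\equiv k_\varepsilon\pmod{p-1}$, such that $m_n(k')\ne0$ for some $1\le n\le d_k^{\mathrm{Iw}}$. *)

From mathcomp Require Import all_boot all_order all_algebra.
Set Implicit Arguments. Unset Strict Implicit. Unset Printing Implicit Defensive.
Import Order.TTheory GRing.Theory Num.Theory.

Definition resid (p m : nat) : nat := (m %% p.-1)%N.

Definition k_eps (p a s : nat) : nat := (2 + resid p (a + 2 * s))%N.

Definition delta_eps (p a s : nat) : nat := ((s + resid p (a + s)) %/ p.-1)%N.

Definition t1 (p a s : nat) : nat :=
  if (a + s < p.-1)%N then (s + delta_eps p a s)%N
  else (resid p (a + s) + delta_eps p a s + 1)%N.

Definition t2 (p a s : nat) : nat :=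
  if (a + s < p.-1)%N then (a + s + delta_eps p a s + 2)%N
  else (a + s + delta_eps p a s + 1)%N.

Definition k_bul (p a s k : nat) : nat := ((k - k_eps p a s) %/ p.-1)%N.

Local Open Scope ring_scope.

Definition d_Iw (p a s k : nat) : int :=
  2 * (k_bul p a s k)%:Z + 2 - 2 * (delta_eps p a s)%:Z.

(* floor((k_bullet - t1)/(p+1)); divz is floor division for positive divisor *)
Definition q_ur (p a s k : nat) : int :=
  (((k_bul p a s k)%:Z - (t1 p a s)%:Z) %/ (p.+1)%:Z)%Z.

Definition eta (p a s k : nat) : int :=
  if (t2 p a s)%:Z <= (k_bul p a s k)%:Z - (p.+1)%:Z * q_ur p a s k then 1 else 0.

Definition d_ur (p a s k : nat) : int := 2 * q_ur p a s k + 1 + eta p a s k.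

Definition m_n (p a s : nat) (n : int) (k : nat) : int :=
  if (d_ur p a s k < n) && (n < d_Iw p a s k - d_ur p a s k)
  then Num.min (n - d_ur p a s k) (d_Iw p a s k - d_ur p a s k - n)
  else 0.

(* v_p(w_k - w_k') = 1 + v_p(k - k')  (k <> k') *)
Definition vp_wdiff (p k k' : nat) : nat := (1 + logn p ((k - k') + (k' - k)))%N.

From mathcomp Require Import all_boot all_order all_algebra.
From mathcomp Require Import zify.
Import Order.TTheory GRing.Theory Num.Theory.

(* If m_n(k') is nonzero for some n <= d_Iw(k), then d_ur(k') < d_Iw(k) <= 2 k_bul(k) + 2;
   since d_ur(k') >= 2 floor((k_bul(k') - t1)/(p+1)) + 1 and t1 <= p, this forces
   k_bul(k') < (k_bul(k) + 2)(p+1).  Both weights are k_eps plus a multiple of p-1, so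
   |k - k'| = |k_bul(k) - k_bul(k')| (p-1) < p^2 * p^(trunc_log p k_bul(k) + 1), and the
   p-adic valuation of k - k' is at most trunc_log p k_bul(k) + 2. *)

Lemma logn_lt_of_ltn_exp (p m n : nat) : 1 < p -> 0 < n -> n < p ^ m -> logn p n < m.
Proof.
move=> p_gt1 n_gt0 n_lt; rewrite -(ltn_exp2l _ _ p_gt1).
exact: leq_ltn_trans (dvdn_leq n_gt0 (pfactor_dvdnn p n)) n_lt.
Qed.

Lemma eq_mod_decomp (d e k : nat) :
  k = e %[mod d] -> e < k + d -> exists j, k = j * d + e.
Proof.
move=> ke e_lt; have [e_le | k_lt] := leqP e k.
  have /dvdnP [j kE] : d %| k - e by rewrite -eqn_mod_dvd // ke.
  by exists j; rewrite -kE subnK.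
have : d %| e - k by rewrite -eqn_mod_dvd ?ke // ltnW.
by move/dvdn_leq; lia.
Qed.

Lemma dist_mul_pred_lt (p X m n : nat) :
  1 < p -> p <= X -> m < X -> n < (m + 2) * p.+1 ->
  (m - n + (n - m)) * p.-1 < X * p ^ 2.
Proof.
move=> p_gt1 p_le m_lt n_lt; have [n_le | m_lt_n] := leqP n m.
  have -> : m - n + (n - m) = m - n by lia.
  nia.
have -> : m - n + (n - m) = n - m by lia.
have pp_le : p * p <= X * p by rewrite leq_mul2r; lia.
have : (n - m) * p.-1 <= (X * p + p + 1) * p.-1 by rewrite leq_mul2r; nia.
nia.
Qed.

Section DimensionFormulas.

Variables (p a s : nat).
Hypothesis p_gt1 : 1 < p.

Lemma k_eps_le : k_eps p a s <= p.
Proof. have := ltn_pmod (a + 2 * s) (_ : 0 < p.-1); rewrite /k_eps /resid; lia. Qed.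

Lemma k_bulK j : k_bul p a s (j * p.-1 + k_eps p a s) = j.
Proof. by rewrite /k_bul addnK mulnK //; lia. Qed.

Hypothesis s_le : s <= p - 2.

Lemma delta_eps_le1 : delta_eps p a s <= 1.
Proof.
have := ltn_pmod (a + s) (_ : 0 < p.-1).
rewrite /delta_eps /resid => mod_lt; rewrite -ltnS ltn_divLR; lia.
Qed.

Lemma t1_le : t1 p a s <= p.
Proof.
have := ltn_pmod (a + s) (_ : 0 < p.-1); have := delta_eps_le1.
rewrite /t1 /resid; case: ifP; lia.
Qed.

Local Open Scope ring_scope.

Lemma d_Iw_le k : d_Iw p a s k <= 2 * (k_bul p a s k)%:Z + 2.
Proof. rewrite /d_Iw; lia. Qed.

Lemma d_ur_ge k : 2 * q_ur p a s k + 1 <= d_ur p a s k.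
Proof. by rewrite /d_ur /eta; case: ifP; lia. Qed.

Lemma k_bul_lt_q_ur k :
  (k_bul p a s k)%:Z < (q_ur p a s k + 1) * (p.+1)%:Z + (t1 p a s)%:Z.
Proof.
have := ltz_pmod ((k_bul p a s k)%:Z - (t1 p a s)%:Z) (isT : 0 < (p.+1)%:Z).
have := divz_eq ((k_bul p a s k)%:Z - (t1 p a s)%:Z) (p.+1)%:Z.
rewrite /q_ur; lia.
Qed.

Lemma m_n_neq0 n k : m_n p a s n k <> 0 -> d_ur p a s k < n.
Proof. by rewrite /m_n; case: ifP => // /andP []. Qed.

Lemma q_ur_le k k' :
  d_ur p a s k' < d_Iw p a s k -> q_ur p a s k' <= (k_bul p a s k)%:Z.
Proof. by have := d_Iw_le k; have := d_ur_ge k'; lia. Qed.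

Lemma k_bul_lt_of_m_n_neq0 k k' n :
  n <= d_Iw p a s k -> m_n p a s n k' <> 0 ->
  (k_bul p a s k' < (k_bul p a s k + 2) * p.+1)%N.
Proof.
move=> n_le /m_n_neq0 d_lt.
have q_le := q_ur_le _ _ (lt_le_trans d_lt n_le).
have : (q_ur p a s k' + 1) * (p.+1)%:Z <= ((k_bul p a s k)%:Z + 1) * (p.+1)%:Z.
  by rewrite ler_pM2r ?lerD2r.
have := k_bul_lt_q_ur k'; have := t1_le; lia.
Qed.

End DimensionFormulas.

Theorem lemma3p9 (p a s kb : nat) :
  prime p -> (5 <= p)%N -> (1 <= a <= p - 4)%N -> (s <= p - 2)%N -> (1 <= kb)%N ->
  forall k' : nat,
    (2 <= k')%N ->
    k' = k_eps p a s %[mod p.-1] ->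
    k' <> (kb * p.-1 + k_eps p a s)%N ->
    (exists n : int, ((1 <= n)%R /\ (n <= d_Iw p a s (kb * p.-1 + k_eps p a s))%R)
                     /\ m_n p a s n k' <> 0%R) ->
    (vp_wdiff p (kb * p.-1 + k_eps p a s) k' <= trunc_log p kb + 3)%N.
Proof.
move=> _ p_ge5 _ s_le _ k' k'_ge2 k'_mod k'_ne [n [[_ n_le] m_n_k']].
have p_gt1 : 1 < p by lia.
have [kb' k'E] : exists kb', k' = kb' * p.-1 + k_eps p a s.
  by apply: eq_mod_decomp => //; have := k_eps_le p a s p_gt1; lia.
have kb'_lt : kb' < (kb + 2) * p.+1.
  have := k_bul_lt_of_m_n_neq0 p a s p_gt1 s_le _ _ _ n_le m_n_k'.
  by rewrite k'E !(k_bulK p a s p_gt1).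
rewrite /vp_wdiff k'E !subnDr -!mulnBl -mulnDl add1n.
have kb'_ne : kb' <> kb by move=> kbE; apply: k'_ne; rewrite k'E kbE.
apply: logn_lt_of_ltn_exp => //.
  by rewrite muln_gt0; apply/andP; split; lia.
have -> : trunc_log p kb + 3 = (trunc_log p kb).+1 + 2 by lia.
rewrite expnD; apply: dist_mul_pred_lt => //; last exact: trunc_log_ltn.
by rewrite expnS leq_pmulr // expn_gt0 (ltnW p_gt1).
Qed.
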